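(* Let $r\ge 1$ and let $q_1\le\cdots\le q_r$ be positive even integers. Let $G=\Theta_{1,q_1,\ldots,q_r}$. If $p\ge\max\{4,\Delta(G)\}$, then $G$ is strongly $p$-edge-orientable.
   Context: For positive integers $p_1,\ldots,p_k$, the $\Theta$-graph $\Theta_{p_1,\ldots,p_k}$ is the graph obtained from two vertices $x_1,x_2$ joined by $k$ internally disjoint paths, the $i$th path having $p_i$ edges. A path with $1$ edge is the edge $x_1x_2$. An orientation of a graph $H$ is any digraph obtained by replacing each edge $uv$ with the arc $(u,v)$, with the arc $(v,u)$, or with both arcs. A kernel of a digraph $D$ is an independent set $S$ such that every vertex of $D-S$ has an out-neighbor in $S$. $D$ is kernel-perfect if every induced subdigraph of $D$ has a kernel. For $f:V(H)\to\mathbb{N}$, an orientation $D$ of $H$ is $f$-kernel-perfect if it is kernel-perfect and $f(v)\ge 1+d^+_D(v)$ for all $v$. For $f:E(G)\to\mathbb{N}$, $G$ is $f$-edge-orientable if its line graph $L(G)$ admits an $f$-kernel-perfect orientation. For $v\in V(G)$, define $f_{k,v}:E(G)\to\mathbb{N}$ by $f_{k,v}(e)=d_G(v)$ if $e$ is incident to $v$, and $f_{k,v}(e)=k$ otherwise. $G$ is strongly $k$-edge-orientable if $G$ is $f_{k,v}$-edge-orientable for every $v\in V(G)$. *)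

From HB Require Import structures.
From mathcomp Require Import all_boot.
Set Implicit Arguments.
Unset Strict Implicit.
Unset Printing Implicit Defensive.

(* A (multi)graph given by a finite vertex type V, a finite edge type E and
   the endpoint map [ends : E -> V * V]. *)
Definition incident (V E : finType) (ends : E -> V * V) (v : V) (e : E) : bool :=
  ((ends e).1 == v) || ((ends e).2 == v).

Definition degree (V E : finType) (ends : E -> V * V) (v : V) : nat :=
  #|[set e | incident ends v e]|.

Definition maxdeg (V E : finType) (ends : E -> V * V) : nat :=
  \max_(v : V) degree ends v.

Definition line_adj (V E : finType) (ends : E -> V * V) : rel E :=
  fun e f => (e != f) && [exists v, incident ends v e && incident ends v f].

Definition is_orientation (T : finType) (adj : rel T) (D : rel T) : Prop :=
  (forall u v, D u v -> adj u v) /\ (forall u v, adj u v -> D u v || D v u).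

Definition is_kernel_of (T : finType) (D : rel T) (S K : {set T}) : Prop :=
  [/\ K \subset S,
      (forall x y, x \in K -> y \in K -> ~~ D x y) &
      (forall x, x \in S :\: K -> exists y, y \in K /\ D x y)].

Definition kernel_perfect (T : finType) (D : rel T) : Prop :=
  forall S : {set T}, exists K : {set T}, is_kernel_of D S K.

Definition outdeg (T : finType) (D : rel T) (v : T) : nat := #|[set u | D v u]|.

Definition f_kernel_perfect_orientation (T : finType) (adj : rel T)
    (f : T -> nat) (D : rel T) : Prop :=
  [/\ is_orientation adj D, kernel_perfect D & forall v, 1 + outdeg D v <= f v].

Definition f_edge_orientable (V E : finType) (ends : E -> V * V) (f : E -> nat) : Prop :=
  exists D : rel E, f_kernel_perfect_orientation (line_adj ends) f D.

Definition f_kv (V E : finType) (ends : E -> V * V) (k : nat) (v : V) : E -> nat :=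
  fun e => if incident ends v e then degree ends v else k.

Definition strongly_edge_orientable (V E : finType) (ends : E -> V * V) (k : nat) : Prop :=
  forall v : V, f_edge_orientable ends (f_kv ends k v).

(* The Theta graph Theta_{1, q_0, ..., q_{r-1}}.
   Vertices: inl false = x1, inl true = x2, inr (i, m) = the (m+1)-th
   internal vertex of the i-th path (which has q i edges). *)
Definition theta_vert (r : nat) (q : 'I_r -> nat) : finType :=
  (bool + {i : 'I_r & 'I_(q i).-1})%type.

(* k-th vertex (0 <= k <= q i) along path i *)
Definition theta_pv (r : nat) (q : 'I_r -> nat) (i : 'I_r) (k : nat) : theta_vert q :=
  if k == 0 then inl false
  else if k == q i then inl true
  else match (insub k.-1 : option 'I_(q i).-1) with
       | Some o => inr (existT (fun j => 'I_(q j).-1) i o)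
       | None => inl true
       end.

(* Edges: inl tt = the edge x1x2 (path of length 1), inr (i, j) = the j-th edge
   of path i, joining its j-th and (j+1)-th vertices. *)
Definition theta_edge (r : nat) (q : 'I_r -> nat) : finType :=
  (unit + {i : 'I_r & 'I_(q i)})%type.

Arguments theta_pv {r} q i k.
Definition theta_ends (r : nat) (q : 'I_r -> nat) (e : theta_edge q)
  : theta_vert q * theta_vert q :=
  match e with
  | inl _ => (inl false, inl true)
  | inr (existT i j) => (theta_pv q i j, theta_pv q i j.+1)
  end.
Arguments theta_ends {r} q e.

From HB Require Import structures.
From mathcomp Require Import all_boot zify.
Set Implicit Arguments.
Unset Strict Implicit.
Unset Printing Implicit Defensive.

(* An orientation of the line graph is built from a ranking of the edges: an
   arc goes from the higher to the lower rank, except on an even cycle C made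
   of two of the paths, which is ranked above everything and oriented
   cyclically.  Every arc then either descends or alternates the parity of
   the position on C, which makes the orientation kernel-perfect.  The edges
   at v get the lowest ranks and the chord x1x2 the next one, so an edge at v
   only points to other edges at v (out-degree < d(v)), and the chord only to
   edges at v.  The only other edges with more than 3 neighbours are the r+1
   edges of the cliques at x1 and x2; each of them has a neighbour it does not
   point to: a cycle edge above it, or its predecessor on C.  C can be chosen
   away from the path through v as soon as r >= 2 (v a branch vertex) or
   r >= 3 (v internal); for smaller r every edge has at most 3 < p
   neighbours. *)

Section KernelPerfect.
Variables (T : finType) (D : rel T).

Lemma kernel_of_semikernel (S A : {set T}) :
  (forall S' : {set T}, #|S'| < #|S| -> exists K, is_kernel_of D S' K) ->
  A \subset S -> A != set0 ->
  (forall x y, x \in A -> y \in A -> ~~ D x y) ->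
  (forall a y, a \in A -> y \in S -> D a y -> exists2 a', a' \in A & D y a') ->
  exists K, is_kernel_of D S K.
Proof.
move=> IH sAS nA indA semi.
set S' := [set y in S | (y \notin A) && ~~ [exists a in A, D y a]].
have sS'S : S' \subset S by apply/subsetP=> y; rewrite inE => /andP[].
have ltS : #|S'| < #|S|.
  apply: proper_card; rewrite properEneq sS'S andbT; apply/eqP=> eS.
  case/set0Pn: nA => a aA.
  have : a \in S' by rewrite eS (subsetP sAS).
  by rewrite inE aA andbF.
have [K' [sK' indK' domK']] := IH S' ltS.
have K'P y : y \in K' -> [&& y \in S, y \notin A & ~~ [exists a in A, D y a]].
  by move/(subsetP sK'); rewrite inE.
exists (A :|: K'); split.
- by rewrite subUset sAS (subset_trans sK' sS'S).
- move=> x y; rewrite !inE => /orP[xA|xK] /orP[yA|yK].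
  + exact: indA.
  + apply/negP=> Dxy; have /and3P[yS _ /existsP[]] := K'P y yK.
    by have [a' a'A Dya'] := semi x y xA yS Dxy; exists a'; rewrite a'A.
  + apply/negP=> Dxy; have /and3P[_ _ /existsP[]] := K'P x xK.
    by exists y; rewrite yA.
  + exact: indK'.
- move=> x; rewrite !inE negb_or => /andP[/andP[xA xK] xS].
  case: (boolP [exists a in A, D x a]) => [/existsP[a /andP[aA Dxa]]|nex].
    by exists a; rewrite inE aA.
  have xS' : x \in S' :\: K' by rewrite !inE xK xS xA nex.
  have [y [yK Dxy]] := domK' x xS'.
  by exists y; rewrite inE yK orbT.
Qed.

(* The lowest level is bipartite, so a sink in it or one of its colour
   classes is a semikernel; induct on the vertex set. *)
Lemma kernel_perfect_graded (rank : T -> nat) (colour : T -> bool) :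
  (forall u w, D u w -> rank w < rank u \/ rank w = rank u /\ colour w != colour u) ->
  kernel_perfect D.
Proof.
move=> graded S; elim: {S}_.+1 {-2}S (ltnSn #|S|) => // n IHn S leS.
have IH (S' : {set T}) : #|S'| < #|S| -> exists K, is_kernel_of D S' K.
  by move=> ltS'; apply: IHn; apply: leq_trans ltS' _.
have [->|[x0 x0S]] := set_0Vmem S.
  by exists set0; split=> [|x y|x]; rewrite ?sub0set ?inE ?andbF.
have [x xS xmin] : exists2 x, x \in S & forall y, y \in S -> rank x <= rank y.
  by case: (arg_minnP rank x0S) => x; exists x.
set C := [set y in S | rank y == rank x].
have Cout y z : y \in C -> z \in S -> D y z -> z \in C /\ colour z != colour y.
  rewrite inE => /andP[yS /eqP ry] zS Dyz.
  case: (graded _ _ Dyz) => [|[ez cz]]; last by rewrite inE zS ez ry eqxx.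
  by rewrite ry ltnNge xmin.
case: (boolP [exists y in C, ~~ [exists z in S, D y z]]).
  case/existsP=> y /andP[yC /existsPn noout].
  have yS : y \in S by move: yC; rewrite inE => /andP[].
  apply: (kernel_of_semikernel (A := [set y]) IH).
  - by rewrite sub1set.
  - by apply/set0Pn; exists y; rewrite inE.
  - by move=> a b; rewrite !inE => /eqP-> /eqP->; have := noout y; rewrite yS.
  - by move=> a b; rewrite inE => /eqP-> bS Dyb; have := noout b; rewrite bS Dyb.
move/existsPn=> allout.
apply: (kernel_of_semikernel (A := [set y in C | colour y == colour x]) IH).
- by apply/subsetP=> y; rewrite !inE => /andP[/andP[]].
- by apply/set0Pn; exists x; rewrite !inE xS !eqxx.
- move=> a b /setIdP[aC /eqP ca] /setIdP[bC /eqP cb]; apply/negP=> Dab.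
  have bS : b \in S by move: bC; rewrite inE => /andP[].
  by have [_] := Cout a b aC bS Dab; rewrite ca cb eqxx.
- move=> a y /setIdP[aC /eqP ca] yS Day.
  have [yC cy] := Cout a y aC yS Day.
  have := allout y; rewrite yC negbK => /existsP[z /andP[zS Dyz]].
  have [zC cz] := Cout y z yC zS Dyz.
  exists z => //; rewrite inE zC /=.
  by move: cy cz; rewrite ca; case: (colour x); case: (colour y); case: (colour z).
Qed.

End KernelPerfect.

Section LineGraph.
Variables (V E : finType) (ends : E -> V * V).
Local Notation adj := (line_adj ends).

Definition line_nbr (e : E) : {set E} := [set f | adj e f].

Lemma line_adj_sym : symmetric adj.
Proof.
move=> e f; rewrite /line_adj eq_sym; congr (_ && _).
by apply/existsP/existsP=> [][z /andP[a b]]; exists z; apply/andP.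
Qed.

Lemma line_adj_irr : irreflexive adj.
Proof. by move=> e; rewrite /line_adj eqxx. Qed.

Lemma line_adjI (v : V) (e f : E) : e != f -> incident ends v e -> incident ends v f -> adj e f.
Proof. by move=> ef ve vf; rewrite /line_adj ef; apply/existsP; exists v; rewrite ve. Qed.

Lemma line_adjP (e f : E) : adj e f -> exists2 v, incident ends v e & incident ends v f.
Proof. by case/andP=> _ /existsP[v /andP[ve vf]]; exists v. Qed.

Lemma card_line_nbr (e : E) :
  #|line_nbr e| <= (degree ends (ends e).1).-1 + (degree ends (ends e).2).-1.
Proof.
set A := [set f | incident ends (ends e).1 f]; set B := [set f | incident ends (ends e).2 f].
have eA : e \in A by rewrite inE /incident eqxx.
have eB : e \in B by rewrite inE /incident eqxx orbT.
have sub : line_nbr e \subset (A :\ e) :|: (B :\ e).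
  apply/subsetP=> f; rewrite !inE => /andP[ef /existsP[z /andP[ze zf]]].
  by rewrite eq_sym ef; case/orP: ze => /eqP ez; subst z; rewrite zf ?orbT.
apply: (leq_trans (subset_leq_card sub)); apply: (leq_trans (leq_card_setU _ _)).
by rewrite /degree -/A -/B (cardsD1 e A) (cardsD1 e B) eA eB.
Qed.

Lemma outdeg_le_nbr (D : rel E) (e : E) :
  (forall f, D e f -> adj e f) -> outdeg D e <= #|line_nbr e|.
Proof. by move=> sub; apply: subset_leq_card; apply/subsetP=> f; rewrite !inE; apply: sub. Qed.

Lemma outdeg_lt_nbr (D : rel E) (e f : E) : (forall g, D e g -> adj e g) ->
  adj e f -> ~~ D e f -> outdeg D e < #|line_nbr e|.
Proof.
move=> sub ef nDef; apply: proper_card; rewrite properE; apply/andP; split.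
  by apply/subsetP=> g; rewrite !inE; apply: sub.
by apply/subsetPn; exists f; rewrite !inE.
Qed.

End LineGraph.

Section ThetaGraph.
Variables (r : nat) (q : 'I_r -> nat).
Hypothesis q_gt1 : forall i, 1 < q i.

Local Notation V := (theta_vert q).
Local Notation E := (theta_edge q).
Local Notation ends := (theta_ends q).
Local Notation pv := (theta_pv q).
Local Notation adj := (line_adj (theta_ends q)).
Local Notation nbr := (line_nbr (theta_ends q)).

Local Notation hub b := (inl b : V).
Definition ivert (i : 'I_r) (o : 'I_(q i).-1) : V := inr (existT (fun k => 'I_(q k).-1) i o).
Definition chord : E := inl tt.
Definition pedge (i : 'I_r) (j : 'I_(q i)) : E := inr (existT (fun k => 'I_(q k)) i j).

Lemma pv0 i : pv i 0 = hub false. Proof. by []. Qed.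

Lemma pvq i : pv i (q i) = hub true.
Proof. by rewrite /theta_pv eqxx; have := q_gt1 i; case: (q i). Qed.

Lemma pv_ivert i (o : 'I_(q i).-1) : pv i o.+1 = ivert o.
Proof.
have lt_o := ltn_ord o; rewrite /theta_pv /=.
have -> : (o.+1 == q i) = false by apply/eqP; lia.
by rewrite insubT /ivert; congr (inr (existT _ _ _)); apply: val_inj.
Qed.

Lemma pv_cases i a : a <= q i ->
  [\/ a = 0, a = q i | exists o : 'I_(q i).-1, a = o.+1].
Proof.
move=> le_a; have [->|a_gt0] := posnP a; first by constructor 1.
have [->|a_neq] := eqVneq a (q i); first by constructor 2.
have lt_a : a.-1 < (q i).-1 by lia.
by constructor 3; exists (Ordinal lt_a) => /=; lia.
Qed.

Lemma ivert_eq i k (o : 'I_(q i).-1) (o' : 'I_(q k).-1) :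
  (ivert o == ivert o') = (i == k) && (o == o' :> nat).
Proof.
apply/eqP/andP=> [eq_oo'|[/eqP ik /eqP oo']]; last first.
  by subst k; congr (inr (existT _ _ _)); apply: val_inj.
split; last first.
  by have := congr1 (fun x : V => if x is inr y then val (tagged y) else 0) eq_oo' => /= ->.
by have := congr1 (fun x : V => if x is inr y then val (tag y) else 0) eq_oo' => /= /val_inj ->.
Qed.

Lemma pedge_eq i k (j : 'I_(q i)) (j' : 'I_(q k)) :
  (pedge j == pedge j') = (i == k) && (j == j' :> nat).
Proof.
apply/eqP/andP=> [eq_jj'|[/eqP ik /eqP jj']]; last first.
  by subst k; congr (inr (existT _ _ _)); apply: val_inj.
split; last first.
  by have := congr1 (fun x : E => if x is inr y then val (tagged y) else 0) eq_jj' => /= ->.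
by have := congr1 (fun x : E => if x is inr y then val (tag y) else 0) eq_jj' => /= /val_inj ->.
Qed.

Lemma pv_hubE i a b : a <= q i -> (pv i a == hub b) = (a == if b then q i else 0).
Proof.
move=> le_a; have q1 := q_gt1 i.
case: (pv_cases le_a) => [->|->|[o ->]]; rewrite ?pv0 ?pvq ?pv_ivert;
  [idtac | idtac | have lt_o := ltn_ord o]; case: b; rewrite ?eqxx //; apply/eqP/eqP;
  move=> h; try discriminate; try done; exfalso; lia.
Qed.

Lemma ivert_hubF k (o : 'I_(q k).-1) b : (ivert o == hub b) = false.
Proof. by apply/eqP. Qed.

Lemma pv_ivertE i k (o : 'I_(q k).-1) a : a <= q i ->
  (pv i a == ivert o) = (i == k) && (a == o.+1).
Proof.
move=> le_a; have lt_o := ltn_ord o.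
case: (pv_cases le_a) => [->|->|[o' ->]]; rewrite ?pv0 ?pvq ?pv_ivert ?ivert_eq ?eqSS //;
  rewrite eq_sym ivert_hubF; first by rewrite andbF.
by case: eqVneq => //= ik; subst k; apply/esym/negbTE; lia.
Qed.

Definition hub_pos (b : bool) (i : 'I_r) : nat := if b then (q i).-1 else 0.

Lemma hub_pos_lt b i : hub_pos b i < q i.
Proof. by have := q_gt1 i; rewrite /hub_pos; case: b; lia. Qed.

Definition hub_edge (b : bool) (i : 'I_r) : E := pedge (Ordinal (hub_pos_lt b i)).

Lemma incident_hub_pedge b i (j : 'I_(q i)) :
  incident ends (hub b) (pedge j) = (j == hub_pos b i :> nat).
Proof.
have lt_j := ltn_ord j; have q1 := q_gt1 i.
rewrite /incident (pv_hubE b (ltnW lt_j)) (pv_hubE b lt_j) /hub_pos.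
by case: b; apply/idP/idP; lia.
Qed.

Lemma incident_hub_edge b i : incident ends (hub b) (hub_edge b i).
Proof. by rewrite incident_hub_pedge. Qed.

Lemma incident_ivert_pedge k (o : 'I_(q k).-1) i (j : 'I_(q i)) :
  incident ends (ivert o) (pedge j) = (i == k) && ((j == o :> nat) || (j == o.+1 :> nat)).
Proof.
have lt_j := ltn_ord j.
rewrite /incident (pv_ivertE o (ltnW lt_j)) (pv_ivertE o lt_j) -andb_orr eqSS.
by rewrite orbC.
Qed.

Lemma incident_hub_chord b : incident ends (hub b) chord.
Proof. by rewrite /incident; case: b; rewrite eqxx ?orbT. Qed.

Lemma incident_ivert_chord k (o : 'I_(q k).-1) : incident ends (ivert o) chord = false.
Proof. by rewrite /incident !(eq_sym (inl _)) !ivert_hubF. Qed.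

Lemma hub_edgeE b i (j : 'I_(q i)) : (pedge j == hub_edge b i) = (j == hub_pos b i :> nat).
Proof. by rewrite pedge_eq eqxx. Qed.

Lemma hub_edge_inj b : injective (hub_edge b).
Proof. by move=> i k /eqP; rewrite pedge_eq => /andP[/eqP]. Qed.

Lemma edges_at_hub b :
  [set e | incident ends (hub b) e] = chord |: [set hub_edge b i | i in 'I_r].
Proof.
apply/setP=> [][[]|[i j]]; rewrite !inE; first by rewrite incident_hub_chord.
rewrite -/(pedge j) incident_hub_pedge; apply/idP/imsetP=> [hj|[k _ /eqP]].
  by exists i => //; apply/eqP; rewrite hub_edgeE.
by rewrite pedge_eq => /andP[/eqP ik]; subst k.
Qed.

Lemma degree_hub b : degree ends (hub b) = r.+1.
Proof.
rewrite /degree edges_at_hub cardsU1 card_imset ?card_ord; last exact: hub_edge_inj.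
by have -> : chord \in [set hub_edge b i | i in 'I_r] = false by apply/negbTE/imsetP=> [][].
Qed.

Lemma degree_ivert k (o : 'I_(q k).-1) : degree ends (ivert o) = 2.
Proof.
have lt_o : o < q k by have := ltn_ord o; lia.
have lt_o1 : o.+1 < q k by have := ltn_ord o; lia.
rewrite /degree.
have -> : [set e | incident ends (ivert o) e] = [set pedge (Ordinal lt_o); pedge (Ordinal lt_o1)].
  apply/setP=> [][[]|[i j]]; rewrite !inE; first by rewrite incident_ivert_chord.
  by rewrite -/(pedge j) incident_ivert_pedge !pedge_eq -andb_orr.
by rewrite cards2 pedge_eq eqxx /= ltn_eqF.
Qed.

Lemma degree_pv i a : a <= q i ->
  degree ends (pv i a) = if (a == 0) || (a == q i) then r.+1 else 2.
Proof.
case/pv_cases=> [->|->|[o ->]]; rewrite ?pv0 ?pvq ?pv_ivert ?degree_hub ?eqxx ?orbT //.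
by rewrite degree_ivert; have := ltn_ord o; case: ifP => //; lia.
Qed.

Lemma card_nbr_pedge i (j : 'I_(q i)) :
  #|nbr (pedge j)| <= if (j == 0 :> nat) || (j.+1 == q i) then r.+1 else 2.
Proof.
apply: leq_trans (card_line_nbr _ _) _; have lt_j := ltn_ord j; have := q_gt1 i.
rewrite /= (degree_pv (ltnW lt_j)) (degree_pv lt_j).
by case: ifP; case: ifP; case: ifP => //=; lia.
Qed.

Lemma card_nbr_hub_edge b i : #|nbr (hub_edge b i)| <= r.+1.
Proof.
have := card_nbr_pedge (Ordinal (hub_pos_lt b i)); rewrite /hub_pos.
by have := q_gt1 i; case: b => /= q1; rewrite ?eqxx ?orbT // prednK ?eqxx ?orbT // (ltnW q1).
Qed.

Lemma degree_off_chord x : ~~ incident ends x chord -> degree ends x = 2.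
Proof. by case: x => [b|[k o]]; rewrite ?incident_hub_chord // -/(ivert o) degree_ivert. Qed.

Lemma pedge_at_hub i (j : 'I_(q i)) :
  (j == 0 :> nat) || (j.+1 == q i) -> exists b, pedge j = hub_edge b i.
Proof.
case/orP=> hj; [exists false|exists true]; apply/eqP; rewrite hub_edgeE //=.
by move: hj; lia.
Qed.

Lemma adj_pedge_cases i k (j : 'I_(q i)) (j' : 'I_(q k)) : adj (pedge j) (pedge j') ->
  (exists b, [/\ i != k, j = hub_pos b i :> nat & j' = hub_pos b k :> nat])
  \/ (i = k /\ (j.+1 = j' \/ j'.+1 = j)).
Proof.
move=> a; have /andP[ne _] := a; case/line_adjP: a => [][b|[k' o]].
  rewrite !incident_hub_pedge => /eqP hj /eqP hj'; left; exists b; split=> //.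
  by move: ne; apply: contraNneq => ik; subst k; rewrite pedge_eq hj hj' !eqxx.
rewrite -/(ivert o) !incident_ivert_pedge => /andP[/eqP ik hj] /andP[/eqP kk hj'].
by subst i k; right; split=> //; move: ne hj hj'; rewrite pedge_eq eqxx /=; lia.
Qed.

Lemma adj_pedge_succ i (j j' : 'I_(q i)) : j.+1 = j' -> adj (pedge j) (pedge j').
Proof.
move=> jj'; apply: (@line_adjI _ _ _ (pv i j.+1)).
- by rewrite pedge_eq eqxx -jj' /= ltn_eqF.
- by rewrite /incident eqxx orbT.
- by rewrite /incident jj' eqxx.
Qed.

Lemma adj_hub_edge b i k : i != k -> adj (hub_edge b i) (hub_edge b k).
Proof.
move=> ik; apply: (@line_adjI _ _ _ (hub b)); rewrite ?incident_hub_edge //.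
by rewrite pedge_eq (negbTE ik).
Qed.

Lemma hub_next_lt b i : (if b then (q i).-2 else 1) < q i.
Proof. by have := q_gt1 i; case: b; lia. Qed.

Definition hub_next (b : bool) (i : 'I_r) : E := pedge (Ordinal (hub_next_lt b i)).

Lemma adj_hub_next b i : adj (hub_edge b i) (hub_next b i).
Proof.
have := q_gt1 i; case: b => q1; last by apply: adj_pedge_succ.
by rewrite line_adj_sym; apply: adj_pedge_succ => /=; lia.
Qed.

Section Orientation.
Hypothesis q_even : forall i, ~~ odd (q i).
Variables (v : V) (hc : bool) (c d : 'I_r).
Hypothesis c_neq_d : hc -> c != d.

Definition on_cycle (e : E) : bool :=
  if e is inr x then hc && ((tag x == c) || (tag x == d)) else false.

(* The cycle runs from x1 to x2 along path c and back along path d; its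
   length q c + q d is even. *)
Definition cycle_pos (e : E) : nat :=
  if e is inr x then
    if tag x == c then val (tagged x) else q c + ((q d).-1 - val (tagged x))
  else 0.

Definition cycle_succ (u w : E) : bool := cycle_pos w == (cycle_pos u).+1 %% (q c + q d).

Definition key (e : E) : nat := if incident ends v e then 0 else if e == chord then 1 else 2.

(* Off the cycle, ranks are ordered lexicographically by [key] and then by
   [enum_rank], hence pairwise distinct; the cycle sits above all of them. *)
Definition rank (e : E) : nat := if on_cycle e then 3 * #|E| else key e * #|E| + enum_rank e.

Definition theta_orient (u w : E) : bool :=
  adj u w && (if on_cycle u && on_cycle w then cycle_succ u w else rank w < rank u).

Lemma on_cycle_pedge i (j : 'I_(q i)) : on_cycle (pedge j) = hc && ((i == c) || (i == d)).
Proof. by []. Qed.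

Lemma cycle_pos_pedge i (j : 'I_(q i)) :
  cycle_pos (pedge j) = if i == c then j : nat else q c + ((q d).-1 - j).
Proof. by []. Qed.

Lemma cycle_pos_lt u : on_cycle u -> cycle_pos u < q c + q d.
Proof.
case: u => [//|[i j]]; rewrite -/(pedge j) on_cycle_pedge cycle_pos_pedge.
case/andP=> _ /orP[] /eqP ci; subst i; have := ltn_ord j; have := q_gt1 d; case: eqP; lia.
Qed.

Lemma cycle_pos_inj u w : on_cycle u -> on_cycle w -> cycle_pos u = cycle_pos w -> u = w.
Proof.
case: u => [//|[i j]]; case: w => [//|[k l]]; rewrite -/(pedge j) -/(pedge l).
rewrite !on_cycle_pedge !cycle_pos_pedge => /andP[/c_neq_d cd ci] /andP[_ ck].
have dc : (d == c) = false by rewrite eq_sym (negbTE cd).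
have := ltn_ord j; have := ltn_ord l; have := q_gt1 d.
case/orP: ci => /eqP ci; case/orP: ck => /eqP ck; subst i k;
  rewrite ?eqxx ?dc => q1 lt_l lt_j eq_pos;
  apply/eqP; rewrite pedge_eq ?eqxx ?dc ?(negbTE cd) //=; apply/eqP; lia.
Qed.

Lemma odd_cycle_succ u w : cycle_succ u w -> odd (cycle_pos w) = ~~ odd (cycle_pos u).
Proof.
have even_len : odd (q c + q d) = false by rewrite oddD (negbTE (q_even c)) (negbTE (q_even d)).
by rewrite /cycle_succ => /eqP->; rewrite odd_mod.
Qed.

Lemma cycle_succ_unique u w w' :
  on_cycle w -> on_cycle w' -> cycle_succ u w -> cycle_succ u w' -> w = w'.
Proof. by move=> cw cw' /eqP uw /eqP uw'; apply: cycle_pos_inj; rewrite // uw uw'. Qed.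

Lemma cycle_succE u w : on_cycle u -> on_cycle w ->
  cycle_succ u w = (cycle_pos w == (cycle_pos u).+1)
                   || (cycle_pos w == 0) && ((cycle_pos u).+1 == q c + q d).
Proof.
move=> /cycle_pos_lt + /cycle_pos_lt lt_w; rewrite /cycle_succ leq_eqVlt => /orP[/eqP->|lt_u].
  by rewrite modnn eqxx andbT (ltn_eqF lt_w).
by rewrite modn_small // (ltn_eqF lt_u) andbF orbF.
Qed.

Lemma cycle_adj_succ u w :
  on_cycle u -> on_cycle w -> adj u w -> cycle_succ u w || cycle_succ w u.
Proof.
move=> cu cw; rewrite !cycle_succE //; move: cu cw.
case: u => [//|[i j]]; case: w => [//|[k l]]; rewrite -/(pedge j) -/(pedge l).
rewrite !on_cycle_pedge !cycle_pos_pedge => /andP[/c_neq_d cd ci] /andP[_ ck].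
have dc : (d == c) = false by rewrite eq_sym (negbTE cd).
have := ltn_ord j; have := ltn_ord l; have := q_gt1 c; have := q_gt1 d.
case/orP: ci => /eqP ci; case/orP: ck => /eqP ck; subst i k; rewrite ?eqxx ?dc /hub_pos;
  move=> qd qc lt_l lt_j /adj_pedge_cases [[[] [ik hj hl]]|[ik [hl|hl]]];
  (try by rewrite eqxx in ik); (try by rewrite ik eqxx in cd);
  (try rewrite /hub_pos /= in hj hl); lia.
Qed.

Lemma key_le2 e : key e <= 2.
Proof. by rewrite /key; case: ifP => //; case: ifP. Qed.

Lemma rank_on_cycle u : on_cycle u -> rank u = 3 * #|E|.
Proof. by rewrite /rank => ->. Qed.

Lemma rank_off_cycle u : ~~ on_cycle u -> rank u < 3 * #|E|.
Proof.
have lt_u : enum_rank u < #|E| := ltn_ord _.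
by rewrite /rank => /negbTE->; have := key_le2 u; nia.
Qed.

Lemma rank_inj u w : ~~ on_cycle u -> ~~ on_cycle w -> rank u = rank w -> u = w.
Proof.
rewrite /rank => /negbTE-> /negbTE-> /(congr1 (modn^~ #|E|)).
by rewrite !modnMDl !modn_small // => /val_inj/enum_rank_inj.
Qed.

Lemma key_le_of_rank u w : ~~ on_cycle u -> ~~ on_cycle w -> rank w < rank u -> key w <= key u.
Proof.
have lt_u : enum_rank u < #|E| := ltn_ord _.
have lt_w : enum_rank w < #|E| := ltn_ord _.
by rewrite /rank => /negbTE-> /negbTE->; nia.
Qed.

Lemma theta_orient_cycle u w : on_cycle u -> on_cycle w -> theta_orient u w -> cycle_succ u w.
Proof. by move=> cu cw /andP[_]; rewrite cu cw. Qed.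

Lemma theta_orient_off_cycle u w : ~~ on_cycle u -> theta_orient u w ->
  [/\ adj u w, ~~ on_cycle w & key w <= key u].
Proof.
move=> cu /andP[a]; rewrite (negbTE cu) /= => lt_wu.
have cw : ~~ on_cycle w.
  by apply: contraTN lt_wu => cw; rewrite rank_on_cycle // -leqNgt ltnW ?rank_off_cycle.
by split=> //; apply: key_le_of_rank.
Qed.

Lemma theta_orient_adj u w : theta_orient u w -> adj u w.
Proof. by case/andP. Qed.

Lemma theta_orient_is_orientation : is_orientation adj theta_orient.
Proof.
split=> u w; first exact: theta_orient_adj.
move=> a; rewrite /theta_orient (line_adj_sym _ w u) a /= (andbC (on_cycle w)).
case: (boolP (on_cycle u && on_cycle w)) => [/andP[cu cw]|nc].
  exact: cycle_adj_succ.
rewrite -neq_ltn; apply: contraNneq nc => eq_rank; apply/andP.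
have [cu|cu] := boolP (on_cycle u); have [cw|cw] := boolP (on_cycle w) => //.
- by move: eq_rank; rewrite (rank_on_cycle cu) => eq_rank; have := rank_off_cycle cw; lia.
- by move: eq_rank; rewrite (rank_on_cycle cw) => eq_rank; have := rank_off_cycle cu; lia.
by move: a; rewrite (rank_inj cw cu eq_rank) line_adj_irr.
Qed.

Lemma theta_orient_kernel_perfect : kernel_perfect theta_orient.
Proof.
apply: (kernel_perfect_graded (rank := rank) (colour := fun e => odd (cycle_pos e))).
move=> u w /andP[_]; case: ifP => [/andP[cu cw] succ|_]; last by left.
by right; rewrite !rank_on_cycle // (odd_cycle_succ succ); case: odd.
Qed.

Lemma incident_of_low_key u w : ~~ on_cycle u -> key u <= 1 -> theta_orient u w ->
  incident ends v w.
Proof.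
move=> cu + /(theta_orient_off_cycle cu) [a _].
rewrite /key; case: (incident ends v w) => //.
case: eqP a => [-> a|_ _]; last by case: ifP => //; case: ifP.
case: ifP => // _; case: eqP => // eq_u.
by move: a; rewrite eq_u line_adj_irr.
Qed.

Lemma outdeg_incident u :
  ~~ on_cycle u -> incident ends v u -> outdeg theta_orient u < degree ends v.
Proof.
move=> cu vu; rewrite /degree (cardsD1 u) inE vu add1n ltnS.
apply: subset_leq_card; apply/subsetP=> w; rewrite !inE => uw.
rewrite (incident_of_low_key cu _ uw) ?andbT; last by rewrite /key vu.
have [a _ _] := theta_orient_off_cycle cu uw.
by move: a; apply: contraTneq => ->; rewrite line_adj_irr.
Qed.

Lemma outdeg_chord : outdeg theta_orient chord <= degree ends v.
Proof.
apply: subset_leq_card; apply/subsetP=> w; rewrite !inE.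
by apply: incident_of_low_key => //; rewrite /key eqxx; case: ifP.
Qed.

Lemma hub_edge_nonout_nbr b i : hc ->
  exists2 w, adj (hub_edge b i) w & ~~ theta_orient (hub_edge b i) w.
Proof.
move=> hc1; have cd := c_neq_d hc1.
have [ci|nci] := boolP ((i == c) || (i == d)); last first.
  have ic : i != c by move: nci; rewrite negb_or => /andP[].
  exists (hub_edge b c); first exact: adj_hub_edge.
  have cu : ~~ on_cycle (hub_edge b i) by rewrite on_cycle_pedge (negbTE nci) andbF.
  by apply/negP=> /(theta_orient_off_cycle cu)[_]; rewrite on_cycle_pedge hc1 eqxx.
pose i' := if i == c then d else c.
have ii' : i != i' by rewrite /i'; case: eqVneq ci => [->|_] //= /eqP->; rewrite eq_sym.
have cu : on_cycle (hub_edge b i) by rewrite on_cycle_pedge hc1.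
have cw1 : on_cycle (hub_edge b i').
  by rewrite on_cycle_pedge hc1 /i'; case: ifP; rewrite eqxx ?orbT.
have cw2 : on_cycle (hub_next b i) by rewrite on_cycle_pedge hc1.
have [o1|] := boolP (theta_orient (hub_edge b i) (hub_edge b i')); last first.
  by exists (hub_edge b i'); first exact: adj_hub_edge.
exists (hub_next b i); first exact: adj_hub_next.
apply/negP=> /(theta_orient_cycle cu cw2) s2.
have := cycle_succ_unique cw1 cw2 (theta_orient_cycle cu cw1 o1) s2.
by move/eqP; rewrite pedge_eq eq_sym (negbTE ii').
Qed.

Lemma outdeg_hub_edge b i : hc -> outdeg theta_orient (hub_edge b i) <= r.
Proof.
case/(hub_edge_nonout_nbr b i) => w a nout.
have := outdeg_lt_nbr (@theta_orient_adj (hub_edge b i)) a nout.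
by have := card_nbr_hub_edge b i; lia.
Qed.

Lemma outdeg_pedge i (j : 'I_(q i)) :
  (~~ hc -> r <= 2) -> outdeg theta_orient (pedge j) <= maxn 3 r.
Proof.
move=> hc_small; have := outdeg_le_nbr (@theta_orient_adj (pedge j)).
have := card_nbr_pedge j; case: ifP => [/pedge_at_hub[b ->]|_]; last by lia.
have [hc1 _ _|/hc_small] := boolP hc; first by have := outdeg_hub_edge b i hc1; lia.
by lia.
Qed.

Lemma on_cycle_hc u : on_cycle u -> hc.
Proof. by case: u => [//|x] /andP[]. Qed.

Section OutdegreeBound.
Variable p : nat.
Hypothesis p_large : maxn 4 r.+1 <= p.
Hypothesis hc_small : ~~ hc -> r <= 2.
Hypothesis cycle_meets_v_at_hub : forall u, on_cycle u -> incident ends v u -> exists b, v = hub b.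

Lemma outdeg_f_kv e : 1 + outdeg theta_orient e <= f_kv ends p v e.
Proof.
rewrite /f_kv add1n; case: ifP => ve.
  have [cu|cu] := boolP (on_cycle e); last exact: outdeg_incident.
  have [b eq_v] := cycle_meets_v_at_hub cu ve; rewrite eq_v degree_hub ltnS.
  have : e \in [set e | incident ends (hub b) e] by rewrite inE -eq_v.
  rewrite edges_at_hub !inE => /orP[/eqP eq_e|/imsetP[i _ ->]]; first by rewrite eq_e in cu.
  exact: outdeg_hub_edge (on_cycle_hc cu).
have := p_large; rewrite geq_max => /andP[p4 pr].
case: e ve => [[]|[i j]] ve.
  by rewrite -/chord in ve *; have := outdeg_chord; rewrite degree_off_chord ?ve //; lia.
by rewrite -/(pedge j); have := outdeg_pedge j hc_small; lia.
Qed.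

Lemma theta_orient_f_kernel_perfect :
  f_kernel_perfect_orientation adj (f_kv ends p v) theta_orient.
Proof.
split; first exact: theta_orient_is_orientation.
  exact: theta_orient_kernel_perfect.
exact: outdeg_f_kv.
Qed.

End OutdegreeBound.
End Orientation.

Lemma cycle_choice (x : V) : 0 < r -> exists (hc : bool) (c d : 'I_r),
  [/\ hc -> c != d, ~~ hc -> r <= 2 &
      forall u, on_cycle hc c d u -> incident ends x u -> exists b, x = hub b].
Proof.
case: x => [b|[k o]] r0.
  have [r1|r1] := ltnP 1 r.
    have /card_gt1P[c [d [_ _ cd]]] : 1 < #|[set: 'I_r]| by rewrite cardsT card_ord.
    by exists true, c, d; split=> // u _ _; exists b.
  by exists false, (Ordinal r0), (Ordinal r0); split=> [//|_|u _ _]; [lia | exists b].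
have [r2|r2] := ltnP 2 r; last by exists false, k, k; split=> [//|_|u /on_cycle_hc //]; lia.
have /card_gt1P[c [d [ck dk cd]]] : 1 < #|[set~ k]| by rewrite cardsC1 card_ord; lia.
exists true, c, d; split=> // -[//|[i j]]; rewrite -/(pedge j) -/(ivert o).
rewrite on_cycle_pedge incident_ivert_pedge /= => /orP[] /eqP ci /andP[/eqP ik _].
  by move: ck; rewrite -ci ik !inE eqxx.
by move: dk; rewrite -ci ik !inE eqxx.
Qed.

End ThetaGraph.

Theorem mainTheorem15 (r : nat) (q : 'I_r -> nat) (p : nat) :
  0 < r ->
  (forall i : 'I_r, 0 < q i /\ ~~ odd (q i)) ->
  (forall i j : 'I_r, i <= j -> q i <= q j) ->
  maxn 4 (maxdeg (theta_ends q)) <= p ->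
  strongly_edge_orientable (theta_ends q) p.
Proof.
move=> r0 hq _ hp v.
have q_even i : ~~ odd (q i) by case: (hq i).
have q_gt1 i : 1 < q i by case: (hq i); case: (q i) => [|[]].
have p_large : maxn 4 r.+1 <= p.
  move: hp; rewrite !geq_max => /andP[-> deg_p] /=.
  apply: leq_trans deg_p; rewrite -(degree_hub q_gt1 false).
  exact: (leq_bigmax (inl false : theta_vert q)).
have [hc [c [d [cd hc_small cycle_v]]]] := cycle_choice q_gt1 v r0.
by eexists; apply: (theta_orient_f_kernel_perfect q_gt1 q_even cd p_large hc_small cycle_v).
Qed.
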